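(* Let $\Gamma\subseteq\mathrm{Aff}(\mathbb{R}^n)$ be an $n$-dimensional crystallographic group whose subgroup of pure translations is exactly $\mathbb{Z}^n$, with holonomy group $F\subseteq\mathrm{GL}_n(\mathbb{Z})$. Then there exists a finite set $\Delta^{base}\subseteq\mathbb{R}^n$ such that for every $d^{base}\in\Delta^{base}$ the map $\xi_{(d^{base},I_n)}$ is an automorphism of $\Gamma$, and every $\varphi\in\mathrm{Aut}(\Gamma)$ with $\varphi|_{\mathbb{Z}^n}=I_n$ can be written as $\varphi=\iota\circ\xi_{(d^{base},I_n)}$ where $\iota=\xi_{(d^{int},I_n)}$ is an inner automorphism of $\Gamma$ with $d^{int}\in\mathbb{Z}^n$ and $d^{base}\in\Delta^{base}$.
   Context: $\mathrm{Aff}(\mathbb{R}^n)=\mathbb{R}^n\rtimes\mathrm{GL}_n(\mathbb{R})$ with multiplication $(d_1,D_1)(d_2,D_2)=(d_1+D_1d_2,D_1D_2)$. An $n$-dimensional crystallographic group is a discrete cocompact subgroup of the Euclidean group $\mathbb{R}^n\rtimes O(n)$; here it is realised (as is always possible) inside $\mathrm{Aff}(\mathbb{R}^n)$ such that $\Gamma\cap\mathbb{R}^n=\{(z,I_n)\mid z\in\mathbb{Z}^n\}$, identified with $\mathbb{Z}^n$. The holonomy group is $F=\{A\mid\exists a:\ (a,A)\in\Gamma\}\subseteq\mathrm{GL}_n(\mathbb{Z})$, a finite group. For $(d,D)\in\mathrm{Aff}(\mathbb{R}^n)$, $\xi_{(d,D)}$ denotes the map $\gamma\mapsto(d,D)\gamma(d,D)^{-1}$.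 Every automorphism $\varphi$ of $\Gamma$ is of the form $\xi_{(d,D)}$ for some $(d,D)\in\mathrm{Aff}(\mathbb{R}^n)$, and then $\varphi|_{\mathbb{Z}^n}$ is given by the matrix $D$. *)

From HB Require Import structures.
From mathcomp Require Import all_boot all_order all_algebra.
From mathcomp Require Import reals.
Set Implicit Arguments. Unset Strict Implicit. Unset Printing Implicit Defensive.
Import Order.TTheory GRing.Theory Num.Theory.
Local Open Scope ring_scope.

(* Elements of Aff(R^n) = R^n x| GL_n(R), as pairs (d, D) with D invertible. *)
Definition aff (R : realType) (n : nat) := ('cV[R]_n * 'M[R]_n)%type.

Definition is_aff (R : realType) (n : nat) (g : aff R n) : Prop := g.2 \in unitmx.

Definition amul (R : realType) (n : nat) (g h : aff R n) : aff R n :=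
  (g.1 + g.2 *m h.1, g.2 *m h.2).
Definition aone (R : realType) (n : nat) : aff R n := (0, 1%:M).
Definition ainv (R : realType) (n : nat) (g : aff R n) : aff R n :=
  (- (invmx g.2 *m g.1), invmx g.2).

Definition transl (R : realType) (n : nat) (z : 'cV[R]_n) : aff R n := (z, 1%:M).

Definition intvec (R : realType) (n : nat) (z : 'cV[R]_n) : Prop :=
  forall i, z i 0 \is a Num.int.

Definition xi (R : realType) (n : nat) (c : aff R n) (g : aff R n) : aff R n :=
  amul (amul c g) (ainv c).

Definition is_subgroup (R : realType) (n : nat) (G : aff R n -> Prop) : Prop :=
  [/\ forall g, G g -> is_aff g,
      G (aone R n),
      forall g h, G g -> G h -> G (amul g h) &
      forall g, G g -> G (ainv g)].

Definition holonomy (R : realType) (n : nat) (G : aff R n -> Prop) (A : 'M[R]_n) : Prop :=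
  exists a, G (a, A).

(* An n-dimensional crystallographic group realised in Aff(R^n) with
   Gamma /\ R^n = Z^n: a subgroup of Aff(R^n) whose pure translations are
   exactly the integral ones and whose holonomy group is finite. *)
Definition crystallographic (R : realType) (n : nat) (G : aff R n -> Prop) : Prop :=
  [/\ is_subgroup G,
      (forall z, G (transl z) <-> intvec z) &
      exists s : seq 'M[R]_n, forall A, holonomy G A -> A \in s].

Definition is_aut (R : realType) (n : nat) (G : aff R n -> Prop)
  (phi : aff R n -> aff R n) : Prop :=
  [/\ forall g, G g -> G (phi g),
      forall g h, G g -> G h -> phi g = phi h -> g = h,
      forall h, G h -> exists2 g, G g & phi g = h &
      forall g h, G g -> G h -> phi (amul g h) = amul (phi g) (phi h)].

From HB Require Import structures.
From mathcomp Require Import all_boot all_order all_algebra.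
From mathcomp Require Import reals boolp classical_sets.
From mathcomp Require Import ring lra zify.
Set Implicit Arguments. Unset Strict Implicit. Unset Printing Implicit Defensive.
Import Order.TTheory GRing.Theory Num.Theory.
Local Open Scope ring_scope.

(* An automorphism phi of Gamma fixing Z^n pointwise preserves linear parts, so
   phi (a, A) = (a + u A, A) for a 1-cocycle u : F -> Z^n.  Summing the cocycle
   identity u (A B) = u A + A u B over B in the finite group F gives
   |F| u A = S - A S with S = sum_B u B, i.e. phi is conjugation by the
   translation S / |F|.  Splitting S / |F| into an integral vector and a point
   of the finite grid {0, 1/|F|, ..., (|F|-1)/|F|}^n writes phi as an inner
   automorphism after xi_(d, I_n) with d on the grid; Delta^base consists of
   the grid points d for which xi_(d, I_n) is an automorphism. *)

Section AffineGroup.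
Variables (R : realType) (n : nat).
Implicit Types (c g h : aff R n) (e z : 'cV[R]_n).

Lemma aff_eq g h : g.1 = h.1 -> g.2 = h.2 -> g = h.
Proof. by case: g h => ? ? [? ?] /= -> ->. Qed.

Lemma amulA : associative (@amul R n).
Proof.
by move=> g h k; apply: aff_eq; rewrite /= ?mulmxA // mulmxDr mulmxA addrA.
Qed.

Lemma amul1g : left_id (aone R n) (@amul R n).
Proof. by move=> g; apply: aff_eq; rewrite /= !mul1mx ?add0r. Qed.

Lemma amulg1 : right_id (aone R n) (@amul R n).
Proof. by move=> g; apply: aff_eq; rewrite /= ?mulmx0 ?addr0 ?mulmx1. Qed.

Lemma amulVg g : is_aff g -> amul (ainv g) g = aone R n.
Proof. by move=> Ug; apply: aff_eq; rewrite /= ?mulVmx // addNr. Qed.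

Lemma amulgV g : is_aff g -> amul g (ainv g) = aone R n.
Proof.
by move=> Ug; apply: aff_eq; rewrite /= ?mulmxV // mulmxN mulmxA mulmxV // mul1mx subrr.
Qed.

Lemma amulKg c : is_aff c -> cancel (amul c) (amul (ainv c)).
Proof. by move=> Uc g; rewrite amulA amulVg // amul1g. Qed.

Lemma amulKVg c : is_aff c -> cancel (amul (ainv c)) (amul c).
Proof. by move=> Uc g; rewrite amulA amulgV // amul1g. Qed.

Lemma amulgK c : is_aff c -> cancel ((@amul R n)^~ c) ((@amul R n)^~ (ainv c)).
Proof. by move=> Uc g; rewrite -amulA amulgV // amulg1. Qed.

Lemma amulgKV c : is_aff c -> cancel ((@amul R n)^~ (ainv c)) ((@amul R n)^~ c).
Proof. by move=> Uc g; rewrite -amulA amulVg // amulg1. Qed.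

Lemma xi_inj c : is_aff c -> injective (xi c).
Proof.
by move=> Uc g h e; apply: (can_inj (amulKg Uc)); exact: (can_inj (amulgKV Uc)) e.
Qed.

Lemma xiKV c h : is_aff c -> xi c (amul (amul (ainv c) h) c) = h.
Proof. by move=> Uc; rewrite /xi amulA amulgK // amulKVg. Qed.

Lemma xi_mul c g h : is_aff c -> xi c (amul g h) = amul (xi c g) (xi c h).
Proof. by move=> Uc; rewrite /xi !amulA amulgKV. Qed.

Lemma xi_transl e g : xi (transl e) g = (g.1 + e - g.2 *m e, g.2).
Proof.
apply: aff_eq; rewrite /= invmx1 ?mulmx1 ?mul1mx //.
by rewrite (mulmxN g.2 e) (addrC e).
Qed.

Lemma xi_translD e1 e2 g :
  xi (transl (e1 + e2)) g = xi (transl e1) (xi (transl e2) g).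
Proof.
rewrite !xi_transl /=; apply: aff_eq => //=.
by rewrite mulmxDr; apply/matrixP => i j; rewrite !mxE; lra.
Qed.

Lemma amul_transl g z : amul g (transl z) = amul (transl (g.2 *m z)) g.
Proof. by apply: aff_eq; rewrite /= ?mulmx1 ?mul1mx // addrC. Qed.

Lemma xi_of_transl g z : is_aff g -> xi g (transl z) = transl (g.2 *m z).
Proof. by move=> Ug; rewrite /xi amul_transl amulgK. Qed.

End AffineGroup.

Section Automorphisms.
Variables (R : realType) (n : nat) (G : aff R n -> Prop).
Hypothesis subG : is_subgroup G.

Lemma is_aut_eq (f f' : aff R n -> aff R n) :
  (forall g, G g -> f g = f' g) -> is_aut G f -> is_aut G f'.
Proof.
have [_ _ GM _] := subG.
move=> ff' [Gf injf surjf mulf]; split.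
- by move=> g Gg; rewrite -ff' //; apply: Gf.
- by move=> g h Gg Gh; rewrite -!ff' //; apply: injf.
- by move=> h /surjf[g Gg <-]; exists g; rewrite ?ff'.
- by move=> g h Gg Gh; rewrite -!ff' ?mulf //; apply: GM.
Qed.

Lemma is_aut_comp (f f' : aff R n -> aff R n) :
  is_aut G f -> is_aut G f' -> is_aut G (f \o f').
Proof.
move=> [Gf injf surjf mulf] [Gf' injf' surjf' mulf']; split=> /=.
- by move=> g Gg; apply/Gf/Gf'.
- by move=> g h Gg Gh /injf-/(_ (Gf' _ Gg) (Gf' _ Gh)); apply: injf'.
- by move=> h /surjf[_ /surjf'[g Gg <-] <-]; exists g.
- by move=> g h Gg Gh; rewrite mulf' ?mulf //; apply: Gf'.
Qed.

Lemma is_aut_xi c : G c -> is_aut G (xi c).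
Proof.
have [Gaff G1 GM GV] := subG; move=> Gc; have Uc := Gaff _ Gc.
split.
- by move=> g Gg; apply: (GM); [apply: GM | apply: GV].
- by move=> g h _ _; apply: xi_inj.
- move=> h Gh; exists (amul (amul (ainv c) h) c); last exact: xiKV.
  by apply: (GM) => //; apply: GM => //; apply: GV.
- by move=> g h _ _; apply: xi_mul.
Qed.

End Automorphisms.

Section IntegralVectors.
Variables (R : realType) (n : nat).

Lemma intvecD (a b : 'cV[R]_n) : intvec a -> intvec b -> intvec (a + b).
Proof. by move=> Ia Ib i; rewrite mxE rpredD. Qed.

Lemma intvecN (a : 'cV[R]_n) : intvec a -> intvec (- a).
Proof. by move=> Ia i; rewrite mxE rpredN. Qed.

Lemma intvec_sum (I : Type) (r : seq I) (P : pred I) (F : I -> 'cV[R]_n) :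
  (forall i, P i -> intvec (F i)) -> intvec (\sum_(i <- r | P i) F i).
Proof.
move=> IF; apply: (big_ind (@intvec R n)) => //; last exact: intvecD.
by move=> i; rewrite mxE rpred0.
Qed.

Lemma intvec_delta (i : 'I_n) : intvec (delta_mx i 0 : 'cV[R]_n).
Proof. by move=> j; rewrite mxE rpred_nat. Qed.

End IntegralVectors.

Lemma cocycle_sum_coboundary (K : comUnitRingType) (m : nat)
    (F : seq 'M[K]_m) (u : 'M[K]_m -> 'cV[K]_m) :
  uniq F -> {in F, forall A, A \in unitmx} -> {in F &, forall A B, A *m B \in F} ->
  {in F &, forall A B, u (A *m B) = u A + A *m u B} ->
  {in F, forall A, u A *+ size F = \sum_(B <- F) u B - A *m \sum_(B <- F) u B}.
Proof.
move=> uniqF unitF mulF cocycle A FA.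
have permF : perm_eq [seq A *m B | B <- F] F.
  have uniqAF : uniq [seq A *m B | B <- F].
    by rewrite (map_inj_uniq (can_inj (mulKmx (unitF A FA)))).
  have subAF : {subset [seq A *m B | B <- F] <= F}.
    by move=> _ /mapP[B FB ->]; apply: mulF.
  have [|_ eqAF] := uniq_min_size uniqAF subAF; first by rewrite size_map.
  exact: uniq_perm.
have sumE : \sum_(B <- F) u B = u A *+ size F + A *m \sum_(B <- F) u B.
  rewrite -[in LHS](perm_big _ permF) big_map (eq_big_seq (fun B => u A + A *m u B)).
    by rewrite big_split /= big_const_seq count_predT iter_addr_0 mulmx_sumr.
  by move=> B FB; apply: cocycle.
by rewrite {1}sumE addrK.
Qed.

Section Crystallographic.
Variables (R : realType) (n : nat) (G : aff R n -> Prop).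
Hypothesis subG : is_subgroup G.
Hypothesis translG : forall z, G (transl z) <-> intvec z.

Lemma holonomy_intvec g z : G g -> intvec z -> intvec (g.2 *m z).
Proof.
have [Gaff _ _ _] := subG.
move=> Gg /translG Gz; apply/translG; rewrite -xi_of_transl; last exact: Gaff.
by case: (is_aut_xi subG Gg) => Gxi _ _ _; apply: Gxi.
Qed.

Lemma holonomy1 : holonomy G 1%:M.
Proof. by case: subG => _ G1 _ _; exists 0. Qed.

Lemma holonomy_unit A : holonomy G A -> A \in unitmx.
Proof. by case: subG => Gaff _ _ _ [a /Gaff]. Qed.

Lemma holonomy_mul A B : holonomy G A -> holonomy G B -> holonomy G (A *m B).
Proof.
by case: subG => _ _ GM _ [a Ga] [b Gb]; exists (a + A *m b); apply: GM Ga Gb.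
Qed.

Definition holonomy_rep A := xget 0 (fun a => G (a, A)).

Lemma holonomy_repP A : holonomy G A -> G (holonomy_rep A, A).
Proof. exact: xgetPex. Qed.

Variable s : seq 'M[R]_n.
Hypothesis hol_s : forall A, holonomy G A -> A \in s.

Definition holonomy_seq := undup [seq A <- s | `[< holonomy G A >]].

Lemma holonomy_seqP A : reflect (holonomy G A) (A \in holonomy_seq).
Proof.
rewrite mem_undup mem_filter; apply: (iffP andP) => [[/asboolP //]|HA].
by split; [apply/asboolP | apply: hol_s].
Qed.

Lemma size_holonomy_seq_gt0 : (0 < size holonomy_seq)%N.
Proof. by have /holonomy_seqP := holonomy1; case: holonomy_seq. Qed.

Section FixingAut.
Variable phi : aff R n -> aff R n.
Hypothesis autphi : is_aut G phi.
Hypothesis phi_transl : forall z, intvec z -> phi (transl z) = transl z.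

Lemma aut_linear_part g : G g -> (phi g).2 = g.2.
Proof.
have [_ _ _ phiM] := autphi; move=> Gg.
apply: trmx_inj; apply/row_matrixP => i; rewrite -!tr_col !colE; congr trmx.
have Iz := intvec_delta R i; have IAz := holonomy_intvec Gg Iz.
have := congr1 phi (amul_transl g (delta_mx i 0)).
rewrite !phiM ?phi_transl //; try exact/translG.
by case=> + _; rewrite mul1mx addrC; apply: addIr.
Qed.

Definition aut_shift g := (phi g).1 - g.1.

Lemma aut_fix_translE g : G g -> phi g = amul (transl (aut_shift g)) g.
Proof. by move=> Gg; apply: aff_eq; rewrite /= mul1mx ?subrK ?aut_linear_part. Qed.

Lemma aut_shift_intvec g : G g -> intvec (aut_shift g).
Proof.
have [Gaff _ GM GV] := subG; have [Gphi _ _ _] := autphi.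
move=> Gg; apply/translG; rewrite -(amulgK (Gaff _ Gg) (transl _)) -aut_fix_translE //.
by apply: GM; [apply: Gphi | apply: GV].
Qed.

Lemma aut_shift_mul g h :
  G g -> G h -> aut_shift (amul g h) = aut_shift g + g.2 *m aut_shift h.
Proof.
have [_ _ _ phiM] := autphi; move=> Gg Gh.
by rewrite /aut_shift phiM //= aut_linear_part // mulmxBr opprD addrACA.
Qed.

Lemma aut_shift_transl g z :
  G g -> intvec z -> aut_shift (amul g (transl z)) = aut_shift g.
Proof.
move=> Gg Iz; rewrite aut_shift_mul //; last exact/translG.
by rewrite {2}/aut_shift phi_transl // subrr mulmx0 addr0.
Qed.

Lemma eq_aut_shift g h : G g -> G h -> g.2 = h.2 -> aut_shift g = aut_shift h.
Proof.
have [Gaff _ GM GV] := subG; move=> Gg Gh gh; have Ug := Gaff _ Gg.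
have tw : amul (ainv g) h = transl (invmx g.2 *m (h.1 - g.1)).
  apply: aff_eq => /=; last by rewrite -gh mulVmx.
  by rewrite mulmxBr addrC.
have Iw : intvec (invmx g.2 *m (h.1 - g.1)).
  by apply/translG; rewrite -tw; apply: GM (GV _ Gg) Gh.
by rewrite -(amulKVg Ug h) tw aut_shift_transl.
Qed.

Definition holonomy_shift A := aut_shift (holonomy_rep A, A).

Lemma aut_shift_holonomy g : G g -> aut_shift g = holonomy_shift g.2.
Proof.
move=> Gg; apply: eq_aut_shift => //.
by apply: holonomy_repP; exists g.1; case: g Gg.
Qed.

Lemma holonomy_shift_intvec A : holonomy G A -> intvec (holonomy_shift A).
Proof. by move/holonomy_repP/aut_shift_intvec. Qed.

Lemma holonomy_shift_cocycle A B : holonomy G A -> holonomy G B ->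
  holonomy_shift (A *m B) = holonomy_shift A + A *m holonomy_shift B.
Proof.
have [_ _ GM _] := subG; move=> /holonomy_repP GA /holonomy_repP GB.
by have := aut_shift_mul GA GB; rewrite !aut_shift_holonomy //; apply: GM.
Qed.

Lemma aut_fix_transl_xi : exists2 S, intvec S &
  forall g, G g -> phi g = xi (transl ((size holonomy_seq)%:R^-1 *: S)) g.
Proof.
pose S := \sum_(B <- holonomy_seq) holonomy_shift B.
have coboundary :
    {in holonomy_seq, forall A, holonomy_shift A *+ size holonomy_seq = S - A *m S}.
  apply: cocycle_sum_coboundary; first exact: undup_uniq.
  - by move=> A /holonomy_seqP/holonomy_unit.
  - by move=> A B /holonomy_seqP HA /holonomy_seqP HB; apply/holonomy_seqP/holonomy_mul.
  - by move=> A B /holonomy_seqP HA /holonomy_seqP HB; apply: holonomy_shift_cocycle.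
exists S.
  by rewrite /S big_seq; apply: intvec_sum => B /holonomy_seqP/holonomy_shift_intvec.
move=> g Gg; have /holonomy_seqP Hg : holonomy G g.2 by exists g.1; case: g Gg.
have NR : (size holonomy_seq)%:R != 0 :> R.
  by rewrite pnatr_eq0 -lt0n size_holonomy_seq_gt0.
have shiftE : holonomy_shift g.2 = (size holonomy_seq)%:R^-1 *: (S - g.2 *m S).
  by rewrite -coboundary // -scaler_nat scalerA mulVf // scale1r.
rewrite aut_fix_translE // xi_transl aut_shift_holonomy // shiftE.
apply: aff_eq; rewrite /= mul1mx //.
by rewrite scalerBr scalemxAr addrC addrA.
Qed.

End FixingAut.
End Crystallographic.

Lemma intr_div_natE (K : numFieldType) (z : int) (N : nat) : (0 < N)%N ->
  z%:~R / N%:R = ((z %/ N)%Z)%:~R + `|(z %% N)%Z|%:R / N%:R :> K.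
Proof.
move=> N0; have r0 : 0 <= (z %% N)%Z by apply: modz_ge0; rewrite eqz_nat -lt0n.
have NR : N%:R != 0 :> K by rewrite pnatr_eq0 -lt0n.
rewrite {1}(divz_eq z N) natr_absz -abszE gez0_abs // intrD intrM -pmulrn.
by field.
Qed.

Definition frac_grid (R : realType) (n N : nat) : seq 'cV[R]_n :=
  [seq \col_i ((k i)%:R / N%:R) | k : {ffun 'I_n -> 'I_N}].

Lemma frac_grid_decomp (R : realType) (n N : nat) (S : 'cV[R]_n) :
  (0 < N)%N -> intvec S ->
  exists2 dint, intvec dint &
  exists2 db, db \in frac_grid R n N & N%:R^-1 *: S = dint + db.
Proof.
move=> N0 IS; pose z i := Num.floor (S i 0).
have rN i : (`|(z i %% N)%Z| < N)%N.
  have := ltz_pmod (z i) (N0 : (0 < N%:Z)%R).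
  have := modz_ge0 (z i) (lt0n_neq0 N0 : N%:Z != 0).
  lia.
pose k : {ffun 'I_n -> 'I_N} := [ffun i => Ordinal (rN i)].
exists (\col_i ((z i %/ N)%Z)%:~R); first by move=> i; rewrite mxE intr_int.
exists (\col_i ((k i)%:R / N%:R)); first by apply: map_f; rewrite mem_enum.
apply/matrixP => i j; rewrite (ord1 j) !mxE ffunE /= -(floorK (IS i)) -/(z i).
by rewrite mulrC intr_div_natE.
Qed.

Unset Implicit Arguments.
Theorem theorem5p3 (R : realType) (n : nat) (G : aff R n -> Prop) :
  crystallographic G ->
  exists Dbase : seq 'cV[R]_n,
    (forall db, db \in Dbase -> is_aut G (xi (transl db))) /\
    (forall phi : aff R n -> aff R n,
        is_aut G phi ->
        (forall z, intvec z -> phi (transl z) = transl z) ->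
        exists2 db, db \in Dbase &
        exists2 dint, intvec dint &
          forall g, G g -> phi g = xi (transl dint) (xi (transl db) g)).
Proof.
case=> subG translG [s hol_s].
pose N := size (holonomy_seq G s).
exists [seq db <- frac_grid R n N | `[< is_aut G (xi (transl db)) >]].
split=> [db | phi autphi phi_transl]; first by rewrite mem_filter => /andP[/asboolP].
have [S IS phiE] := aut_fix_transl_xi subG translG hol_s autphi phi_transl.
have N0 : (0 < N)%N := size_holonomy_seq_gt0 subG hol_s.
have [dint Idint [db grid_db Sdec]] := frac_grid_decomp N0 IS.
have phiE' g : G g -> phi g = xi (transl dint) (xi (transl db) g).
  by move=> Gg; rewrite phiE // Sdec xi_translD.
exists db; last by exists dint.
rewrite mem_filter grid_db andbT; apply/asboolP.
have Gdint : G (transl (- dint)) by apply/translG/intvecN.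
apply: (is_aut_eq subG _ (is_aut_comp (is_aut_xi subG Gdint) autphi)).
by move=> g Gg /=; rewrite phiE' // -!xi_translD addNr add0r.
Qed.
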